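(* Let $T$ be a left-continuous $t$-norm, let $\star=\star_T$, and let $(G,\cdot,D,T)$ and $(G',\cdot,D',T)$ be two complete invariant Menger groups. Then the following are equivalent: (1) there is a group isomorphism $\mathcal I:G\to G'$ with $D'(\mathcal I(x),\mathcal I(y))=D(x,y)$ for all $x,y\in G$; (2) there is a monoid isomorphism $\Phi:(Lip^1_\star(G,\Delta^+),\odot)\to(Lip^1_\star(G',\Delta^+),\odot)$ with $\overline{\mathbb D}'(\Phi(f),\Phi(g))=\overline{\mathbb D}(f,g)$ for all $f,g\in Lip^1_\star(G,\Delta^+)$.
   Context: A distribution function is a nondecreasing, left-continuous function $F:[-\infty,+\infty]\to[0,1]$ with $F(-\infty)=0$, $F(+\infty)=1$; $\Delta^+$ is the set of distribution functions with $F(0)=0$, ordered pointwise (a complete lattice with maximum $\mathcal H_0$, $\mathcal H_0(t)=0$ for $t\le0$, $1$ for $t>0$, and minimum $\mathcal H_\infty$, $\mathcal H_\infty(t)=0$ for $t<+\infty$, $\mathcal H_\infty(+\infty)=1$). A $t$-norm is a map $T:[0,1]^2\to[0,1]$ that is commutative, associative, nondecreasing in each argument, with $T(x,1)=x$. For a $t$-norm $T$, $(L\star_T K)(t)=\sup_{s+u=t}T(L(s),K(u))$; the paper uses (as a known fact from the literature) that for left-continuous $T$, $\star_T$ is a triangle function (commutative, associative, nondecreasing in each argument, $F\star_T\mathcal H_0=F$) which is continuous ($F_n\star_T L_n\xrightarrow{w}F\star_T L$ whenever $F_n\xrightarrow{w}F$, $L_n\xrightarrow{w}L$, where $\xrightarrow{w}$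 denotes convergence at every continuity point of the limit) and sup-continuous ($\sup_i(F_i\star_T L)=(\sup_iF_i)\star_T L$ for every nonempty family). A Menger group $(G,\cdot,D,T)$ is a group $G$ with $D:G\times G\to\Delta^+$ satisfying (i) $D(p,q)=\mathcal H_0$ iff $p=q$; (ii) $D(p,q)=D(q,p)$; (iii) $D(p,q)\star_T D(q,r)\le D(p,r)$; it is invariant if $D(pr,qr)=D(rp,rq)=D(p,q)$ for all $p,q,r$, and complete if for every sequence $(z_n)$ with $D(z_n,z_p)\xrightarrow{w}\mathcal H_0$ ($n,p\to\infty$) there is $z$ with $D(z_n,z)\xrightarrow{w}\mathcal H_0$. $Lip^1_\star(G,\Delta^+)$ is the set of maps $f:G\to\Delta^+$ with $D(x,y)\star f(y)\le f(x)$ for all $x,y$. For maps $f,g:G\to\Delta^+$, $(f\odot g)(x)=\sup_{y,z\in G,\ yz=x}f(y)\star g(z)$. $\Pi(G)$ is the set of $f\in Lip^1_\star(G,\Delta^+)$ for which there is a Cauchy sequence $(a_n)\subset G$ with $D(a_n,x)\xrightarrow{w}f(x)$ for all $x$. $\mathbb D(f,g)=\sup_{x\in G}f(x)\star g(x)$ for $f,g\in\Pi(G)$. $\overline{\mathbb D}$ on $Lip^1_\star(G,\Delta^+)$ is: $\overline{\mathbb D}(f,g)=\mathbb D(f,g)$ if $f,g\in\Pi(G)$; $\overline{\mathbb D}(f,g)=\mathcal H_0$ if $f=g$; $\overline{\mathbb D}(f,g)=\mathcal H_\infty$ if $f\ne g$ and $(f,g)\notin\Pi(G)\times\Pi(G)$;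 $\overline{\mathbb D}'$ is the same construction for $G'$. *)

From Stdlib Require Import Reals Lra Classical ClassicalEpsilon FunctionalExtensionality.
Open Scope R_scope.

Inductive ER : Type := NInf | Fin (r : R) | PInf.

Definition distf := ER -> R.

(** Supremum of a set of reals (0 if empty or unbounded; only used on
    nonempty subsets of [0,1]). *)
Definition Rsup (E : R -> Prop) : R :=
  match excluded_middle_informative (bound E /\ exists x, E x) with
  | left H => proj1_sig (completeness E (proj1 H) (proj2 H))
  | right _ => 0
  end.

Definition in_Delta_plus (F : distf) : Prop :=
  F NInf = 0 /\ F PInf = 1 /\
  (forall t, 0 <= F t <= 1) /\
  (forall s t : R, s <= t -> F (Fin s) <= F (Fin t)) /\
  (forall t : R, forall eps, 0 < eps -> exists delta, 0 < delta /\
      forall s, t - delta < s < t -> F (Fin t) - F (Fin s) < eps) /\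
  F (Fin 0) = 0.

Definition dle (F G : distf) : Prop := forall t, F t <= G t.

Definition H0 : distf := fun t =>
  match t with NInf => 0 | Fin r => if Rle_dec r 0 then 0 else 1 | PInf => 1 end.

Definition Hinf : distf := fun t =>
  match t with PInf => 1 | _ => 0 end.

Definition dsup (P : distf -> Prop) : distf := fun t =>
  match t with
  | NInf => 0
  | Fin r => Rsup (fun v => exists F, P F /\ v = F (Fin r))
  | PInf => 1
  end.

(** t-norms, with real-valued functions restricted to [0,1]^2. *)
Definition unit_iv (x : R) : Prop := 0 <= x <= 1.

Definition is_tnorm (T : R -> R -> R) : Prop :=
  (forall x y, unit_iv x -> unit_iv y -> unit_iv (T x y)) /\
  (forall x y, unit_iv x -> unit_iv y -> T x y = T y x) /\
  (forall x y z, unit_iv x -> unit_iv y -> unit_iv z ->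
     T x (T y z) = T (T x y) z) /\
  (forall x x' y, unit_iv x -> unit_iv x' -> unit_iv y -> x <= x' ->
     T x y <= T x' y) /\
  (forall x, unit_iv x -> T x 1 = x).

(** Left-continuity (in the first argument; by commutativity in each). *)
Definition tnorm_left_continuous (T : R -> R -> R) : Prop :=
  forall x y, 0 < x <= 1 -> unit_iv y ->
    forall eps, 0 < eps -> exists delta, 0 < delta /\
      forall x', x - delta < x' <= x -> 0 <= x' -> Rabs (T x' y - T x y) < eps.

Definition conv (T : R -> R -> R) (L K : distf) : distf := fun t =>
  match t with
  | NInf => 0
  | Fin r => Rsup (fun v => exists s : R, v = T (L (Fin s)) (K (Fin (r - s))))
  | PInf => 1
  end.

Definition wconv (Fn : nat -> distf) (F : distf) : Prop :=
  forall t : R, continuity_pt (fun s => F (Fin s)) t ->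
    Un_cv (fun n => Fn n (Fin t)) (F (Fin t)).

Definition wconv2 (Fnp : nat -> nat -> distf) (F : distf) : Prop :=
  forall t : R, continuity_pt (fun s => F (Fin s)) t ->
    forall eps, 0 < eps -> exists N : nat, forall n p, (N <= n)%nat -> (N <= p)%nat ->
      Rabs (Fnp n p (Fin t) - F (Fin t)) < eps.

Definition is_group {G : Type} (mul : G -> G -> G) (e : G) (inv : G -> G) : Prop :=
  (forall x y z, mul x (mul y z) = mul (mul x y) z) /\
  (forall x, mul e x = x) /\ (forall x, mul x e = x) /\
  (forall x, mul (inv x) x = e) /\ (forall x, mul x (inv x) = e).

Definition is_Menger {G : Type} (T : R -> R -> R) (D : G -> G -> distf) : Prop :=
  (forall p q, in_Delta_plus (D p q)) /\
  (forall p q, D p q = H0 <-> p = q) /\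
  (forall p q, D p q = D q p) /\
  (forall p q r, dle (conv T (D p q) (D q r)) (D p r)).

Definition is_invariant {G : Type} (mul : G -> G -> G) (D : G -> G -> distf) : Prop :=
  forall p q r, D (mul p r) (mul q r) = D p q /\ D (mul r p) (mul r q) = D p q.

Definition is_Cauchy {G : Type} (D : G -> G -> distf) (z : nat -> G) : Prop :=
  wconv2 (fun n p => D (z n) (z p)) H0.

Definition is_complete {G : Type} (D : G -> G -> distf) : Prop :=
  forall z : nat -> G, is_Cauchy D z ->
    exists z0, wconv (fun n => D (z n) z0) H0.

Definition is_Lip {G : Type} (T : R -> R -> R) (D : G -> G -> distf) (f : G -> distf) : Prop :=
  (forall x, in_Delta_plus (f x)) /\
  (forall x y, dle (conv T (D x y) (f y)) (f x)).

Definition odot {G : Type} (mul : G -> G -> G) (T : R -> R -> R)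
  (f g : G -> distf) : G -> distf := fun x =>
  dsup (fun F => exists y z, mul y z = x /\ F = conv T (f y) (g z)).

Definition in_Pi {G : Type} (T : R -> R -> R) (D : G -> G -> distf) (f : G -> distf) : Prop :=
  is_Lip T D f /\
  exists a : nat -> G, is_Cauchy D a /\ forall x, wconv (fun n => D (a n) x) (f x).

Definition DD {G : Type} (T : R -> R -> R) (f g : G -> distf) : distf :=
  dsup (fun F => exists x, F = conv T (f x) (g x)).

Definition DDbar {G : Type} (T : R -> R -> R) (D : G -> G -> distf) (f g : G -> distf) : distf :=
  match excluded_middle_informative (in_Pi T D f /\ in_Pi T D g) with
  | left _ => DD T f g
  | right _ =>
      match excluded_middle_informative (f = g) with
      | left _ => H0
      | right _ => Hinf
      end
  end.

From Stdlib Require Import Reals Lra Lia Classical ClassicalEpsilon FunctionalExtensionality PropExtensionality.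
Open Scope R_scope.

(* The point masses [D a] are exactly the invertible elements of the monoid
   (Lip, ⊙), with [D a ⊙ D b = D (a b)] and unit [D e].  If [u ⊙ v = D e = v ⊙ u],
   then [u ⊙ v] equals [H0] at [e], so there are factorisations [y_n z_n = e] with
   [u y_n], [v z_n] tending to [H0]; invariance makes [(y_n)] Cauchy, and at its
   limit [a] (completeness) [u a = H0], which forces [u = D a].  Hence a monoid
   isomorphism [Phi] maps point masses to point masses, [Phi (D a) = D' (I a)]
   defines a group isomorphism [I], and [DDbar (D x) (D y) = D x y] makes it an
   isometry.  Conversely, an isometric group isomorphism [I] transports Lip by
   precomposition with [I^-1]. *)

Definition isometric_group_iso {G G' : Type} (mul : G -> G -> G) (D : G -> G -> distf)
  (mul' : G' -> G' -> G') (D' : G' -> G' -> distf) (I : G -> G') : Prop :=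
  (forall x y, I (mul x y) = mul' (I x) (I y)) /\
  (forall y', exists x, I x = y') /\
  (forall x1 x2, I x1 = I x2 -> x1 = x2) /\
  (forall x y, D' (I x) (I y) = D x y).

Definition isometric_Lip_monoid_iso {G G' : Type} (T : R -> R -> R)
  (mul : G -> G -> G) (D : G -> G -> distf) (mul' : G' -> G' -> G') (D' : G' -> G' -> distf)
  (Phi : (G -> distf) -> (G' -> distf)) : Prop :=
  (forall f, is_Lip T D f -> is_Lip T D' (Phi f)) /\
  (forall g, is_Lip T D' g -> exists f, is_Lip T D f /\ Phi f = g) /\
  (forall f1 f2, is_Lip T D f1 -> is_Lip T D f2 -> Phi f1 = Phi f2 -> f1 = f2) /\
  (forall f1 f2, is_Lip T D f1 -> is_Lip T D f2 ->
     Phi (odot mul T f1 f2) = odot mul' T (Phi f1) (Phi f2)) /\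
  (forall f1 f2, is_Lip T D f1 -> is_Lip T D f2 ->
     DDbar T D' (Phi f1) (Phi f2) = DDbar T D f1 f2).

Lemma Rsup_is_lub (E : R -> Prop) : bound E -> (exists x, E x) -> is_lub E (Rsup E).
Proof.
  intros Hb Hne. unfold Rsup.
  destruct (excluded_middle_informative _) as [H|H].
  - exact (proj2_sig (completeness E (proj1 H) (proj2 H))).
  - exfalso; tauto.
Qed.

Lemma Rsup_upper (E : R -> Prop) M x : (forall y, E y -> y <= M) -> E x -> x <= Rsup E.
Proof.
  intros HM Hx. apply (Rsup_is_lub E); [exists M; exact HM | exists x; exact Hx | exact Hx].
Qed.

Lemma Rsup_least (E : R -> Prop) M : (exists x, E x) -> (forall y, E y -> y <= M) -> Rsup E <= M.
Proof.
  intros Hne HM. apply (Rsup_is_lub E); [exists M; exact HM | exact Hne | exact HM].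
Qed.

Lemma Rsup_approx (E : R -> Prop) M : (exists x, E x) -> (forall y, E y -> y <= M) ->
  forall eps, 0 < eps -> exists x, E x /\ Rsup E - eps < x.
Proof.
  intros Hne HM eps He.
  apply NNPP; intros Hno.
  assert (Rsup E <= Rsup E - eps); [|lra].
  apply Rsup_least; [exact Hne|]. intros y Hy.
  apply Rnot_lt_le; intros Hlt. apply Hno. exists y; split; [exact Hy | lra].
Qed.

Lemma Rsup_ext (E E' : R -> Prop) : (forall x, E x <-> E' x) -> Rsup E = Rsup E'.
Proof.
  intros H. f_equal. apply functional_extensionality; intros x.
  apply propositional_extensionality, H.
Qed.

Lemma Rle_of_approx a b : (forall eps, 0 < eps -> a - eps < b) -> a <= b.
Proof.
  intros H. apply Rnot_lt_le; intros Hlt. specialize (H ((a - b) / 2)). lra.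
Qed.

Lemma unit_iv_0 : unit_iv 0. Proof. unfold unit_iv; lra. Qed.
Lemma unit_iv_1 : unit_iv 1. Proof. unfold unit_iv; lra. Qed.

Lemma Delta_unit F t : in_Delta_plus F -> unit_iv (F t).
Proof. intros [_ [_ [h _]]]; exact (h t). Qed.

Lemma Delta_mono F s t : in_Delta_plus F -> s <= t -> F (Fin s) <= F (Fin t).
Proof. intros [_ [_ [_ [h _]]]]; apply h. Qed.

Lemma Delta_NInf F : in_Delta_plus F -> F NInf = 0.
Proof. intros [h _]; exact h. Qed.

Lemma Delta_PInf F : in_Delta_plus F -> F PInf = 1.
Proof. intros [_ [h _]]; exact h. Qed.

Lemma Delta_left_cont F t eps : in_Delta_plus F -> 0 < eps ->
  exists delta, 0 < delta /\ forall s, t - delta < s < t -> F (Fin t) - F (Fin s) < eps.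
Proof. intros [_ [_ [_ [_ [h _]]]]]; apply h. Qed.

Lemma Delta_nonpos F t : in_Delta_plus F -> t <= 0 -> F (Fin t) = 0.
Proof.
  intros HF Ht. pose proof (Delta_mono F t 0 HF Ht). pose proof (Delta_unit F (Fin t) HF).
  destruct HF as [_ [_ [_ [_ [_ h0]]]]]. unfold unit_iv in *. lra.
Qed.

Lemma distf_ext (F K : distf) : (forall t, F t = K t) -> F = K.
Proof. intros; apply functional_extensionality; auto. Qed.

Lemma dle_antisym F K : dle F K -> dle K F -> F = K.
Proof. intros h1 h2; apply distf_ext; intros t; specialize (h1 t); specialize (h2 t); lra. Qed.

Lemma H0_pos t : 0 < t -> H0 (Fin t) = 1.
Proof. intros; simpl; destruct (Rle_dec t 0); lra. Qed.

Lemma H0_Delta : in_Delta_plus H0.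
Proof.
  repeat split; try reflexivity.
  - destruct t as [|r|]; simpl; try lra. destruct (Rle_dec r 0); lra.
  - destruct t as [|r|]; simpl; try lra. destruct (Rle_dec r 0); lra.
  - intros s t Hst; simpl. destruct (Rle_dec s 0), (Rle_dec t 0); lra.
  - intros t eps He. simpl. destruct (Rle_dec t 0) as [h|h].
    + exists 1. split; [lra|]. intros s Hs. destruct (Rle_dec s 0); lra.
    + exists t. split; [lra|]. intros s Hs. destruct (Rle_dec s 0); lra.
  - simpl. destruct (Rle_dec 0 0); lra.
Qed.

Lemma H0_continuity_pos t : 0 < t -> continuity_pt (fun s => H0 (Fin s)) t.
Proof.
  intros Ht eps He. exists t. split; [exact Ht|].
  intros x [_ Hx]. simpl in *. unfold R_dist in *. apply Rabs_def2 in Hx.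
  destruct (Rle_dec x 0), (Rle_dec t 0); try lra.
  rewrite Rminus_diag, Rabs_R0; lra.
Qed.

Lemma Delta_le_H0 F : in_Delta_plus F -> dle F H0.
Proof.
  intros HF [|r|]; simpl.
  - rewrite Delta_NInf; auto; lra.
  - destruct (Rle_dec r 0).
    + rewrite Delta_nonpos; auto; lra.
    + apply (Delta_unit F (Fin r) HF).
  - rewrite Delta_PInf; auto; lra.
Qed.

Lemma Delta_ge_H0_eq F : in_Delta_plus F -> dle H0 F -> F = H0.
Proof. intros HF h; apply dle_antisym; auto. apply Delta_le_H0; auto. Qed.

Lemma Delta_eq_H0 F : in_Delta_plus F ->
  (forall r eps, 0 < r -> 0 < eps -> 1 - eps < F (Fin r)) -> F = H0.
Proof.
  intros HF Hnear. apply Delta_ge_H0_eq; [exact HF|]. intros [|r|].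
  - simpl; rewrite Delta_NInf; auto; lra.
  - destruct (Rle_dec r 0) as [Hr|Hr].
    + simpl. destruct (Rle_dec r 0); [|lra]. apply (Delta_unit F (Fin r) HF).
    + rewrite H0_pos by lra. apply Rle_of_approx; intros eps He. apply Hnear; lra.
  - simpl; rewrite Delta_PInf; auto; lra.
Qed.

Lemma dsup_upper P F r : (forall K, P K -> in_Delta_plus K) -> P F ->
  F (Fin r) <= dsup P (Fin r).
Proof.
  intros HP HF. simpl. apply Rsup_upper with 1.
  - intros y [K [HK ->]]. apply (Delta_unit K _ (HP K HK)).
  - exists F; auto.
Qed.

Lemma dsup_least P r M : (exists F, P F) -> (forall F, P F -> F (Fin r) <= M) ->
  dsup P (Fin r) <= M.
Proof.
  intros [F HF] H. simpl. apply Rsup_least.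
  - exists (F (Fin r)), F; auto.
  - intros y [K [HK ->]]; auto.
Qed.

Lemma dsup_approx P r : (forall F, P F -> in_Delta_plus F) -> (exists F, P F) ->
  forall eps, 0 < eps -> exists F, P F /\ dsup P (Fin r) - eps < F (Fin r).
Proof.
  intros HP [F0 HF0] eps He. simpl.
  destruct (Rsup_approx (fun v => exists F, P F /\ v = F (Fin r)) 1) with (eps := eps)
    as [y [[F [HF ->]] Hy]]; auto.
  - exists (F0 (Fin r)), F0; auto.
  - intros y [F [HF ->]]. apply (Delta_unit F _ (HP F HF)).
  - exists F; auto.
Qed.

Lemma dsup_eq_max P F0 : P F0 -> (forall F, P F -> dle F F0) -> in_Delta_plus F0 ->
  dsup P = F0.
Proof.
  intros HF0 Hle HD. apply distf_ext; intros [|r|]; simpl.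
  - rewrite Delta_NInf; auto.
  - apply Rle_antisym.
    + apply Rsup_least; [exists (F0 (Fin r)), F0; auto|]. intros y [F [HF ->]]. apply Hle; auto.
    + apply Rsup_upper with (F0 (Fin r)); [|exists F0; auto]. intros y [F [HF ->]]. apply Hle; auto.
  - rewrite Delta_PInf; auto.
Qed.

Lemma dsup_Delta P : (exists F, P F) -> (forall F, P F -> in_Delta_plus F) ->
  in_Delta_plus (dsup P).
Proof.
  intros Hne HD. destruct Hne as [F0 HF0].
  assert (Hup : forall F r, P F -> F (Fin r) <= dsup P (Fin r)) by (intros; apply dsup_upper; auto).
  repeat split; try reflexivity.
  - destruct t as [|r|]; simpl; try lra.
    apply Rle_trans with (F0 (Fin r)); [apply (Delta_unit F0 _ (HD F0 HF0))|apply (Hup F0 r HF0)].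
  - destruct t as [|r|]; simpl; try lra.
    apply dsup_least; [exists F0; auto|]. intros F HF; apply (Delta_unit F _ (HD F HF)).
  - intros s t Hst. apply dsup_least; [exists F0; auto|]. intros F HF.
    apply Rle_trans with (F (Fin t)); [apply Delta_mono; auto | apply Hup; auto].
  - intros t eps He.
    destruct (dsup_approx P t HD ltac:(exists F0; auto) (eps/2) ltac:(lra)) as [F [HF Happ]].
    destruct (Delta_left_cont F t (eps/2) (HD F HF) ltac:(lra)) as [d [Hd Hc]].
    exists d. split; [exact Hd|]. intros s Hs. specialize (Hc s Hs).
    pose proof (Hup F s HF). lra.
  - apply Rle_antisym.
    + apply dsup_least; [exists F0; auto|]. intros F HF.
      rewrite (Delta_nonpos F 0 (HD F HF)); lra.
    + apply Rle_trans with (F0 (Fin 0)); [apply (Delta_unit F0 _ (HD F0 HF0))|apply Hup; auto].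
Qed.

Definition epsn (n : nat) : R := / (INR n + 2).

Lemma epsn_pos n : 0 < epsn n.
Proof. unfold epsn. apply Rinv_0_lt_compat. pose proof (pos_INR n). lra. Qed.

Lemma epsn_lt_1 n : epsn n < 1.
Proof.
  unfold epsn. pose proof (pos_INR n). rewrite <- Rinv_1. apply Rinv_lt_contravar; lra.
Qed.

Lemma epsn_small d : 0 < d -> exists N, forall n, (N <= n)%nat -> epsn n < d.
Proof.
  intros Hd. destruct (archimed_cor1 d Hd) as [N [HN HN0]]. exists N. intros n Hn.
  apply Rle_lt_trans with (/ INR N); [|exact HN]. unfold epsn.
  apply Rinv_le_contravar; [apply lt_0_INR; lia|]. apply le_INR in Hn. lra.
Qed.

(* Weak convergence to [H0], for sequences in Delta^+. *)
Definition tends_to_H0 (F : nat -> distf) : Prop :=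
  forall t eps, 0 < t -> 0 < eps ->
    exists N, forall n, (N <= n)%nat -> 1 - eps < F n (Fin t).

Lemma tends_to_H0_of_wconv (F : nat -> distf) : wconv F H0 -> tends_to_H0 F.
Proof.
  intros HF t eps Ht He. destruct (HF t (H0_continuity_pos t Ht) eps He) as [N HN].
  exists N; intros n Hn. specialize (HN n Hn). rewrite H0_pos in HN by exact Ht.
  unfold R_dist in HN. apply Rabs_def2 in HN. lra.
Qed.

Lemma tends_to_H0_of_rate (F : nat -> distf) : (forall n, in_Delta_plus (F n)) ->
  (forall n, 1 - epsn n < F n (Fin (epsn n))) -> tends_to_H0 F.
Proof.
  intros HF Hrate t eps Ht He.
  destruct (epsn_small (Rmin t eps) (Rmin_pos _ _ Ht He)) as [N HN].
  exists N; intros n Hn. specialize (HN n Hn).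
  pose proof (Rmin_l t eps); pose proof (Rmin_r t eps).
  pose proof (Delta_mono _ (epsn n) t (HF n) ltac:(lra)). specialize (Hrate n). lra.
Qed.

Section TNorm.

Context {T : R -> R -> R}.
Hypothesis hT : is_tnorm T.

Lemma tnorm_unit x y : unit_iv x -> unit_iv y -> unit_iv (T x y).
Proof. destruct hT as [h _]; auto. Qed.

Lemma tnorm_comm x y : unit_iv x -> unit_iv y -> T x y = T y x.
Proof. destruct hT as [_ [h _]]; auto. Qed.

Lemma tnorm_assoc x y z : unit_iv x -> unit_iv y -> unit_iv z ->
  T x (T y z) = T (T x y) z.
Proof. destruct hT as [_ [_ [h _]]]; auto. Qed.

Lemma tnorm_mono_l x x' y : unit_iv x -> unit_iv x' -> unit_iv y -> x <= x' ->
  T x y <= T x' y.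
Proof. destruct hT as [_ [_ [_ [h _]]]]; auto. Qed.

Lemma tnorm_1_r x : unit_iv x -> T x 1 = x.
Proof. destruct hT as [_ [_ [_ [_ h]]]]; auto. Qed.

Lemma tnorm_mono_r x y y' : unit_iv x -> unit_iv y -> unit_iv y' -> y <= y' ->
  T x y <= T x y'.
Proof.
  intros. rewrite (tnorm_comm x y), (tnorm_comm x y'); auto. apply tnorm_mono_l; auto.
Qed.

Lemma tnorm_le_l x y : unit_iv x -> unit_iv y -> T x y <= x.
Proof.
  intros Hx Hy. rewrite <- (tnorm_1_r x) at 2 by exact Hx.
  apply tnorm_mono_r; auto using unit_iv_1. apply Hy.
Qed.

Lemma tnorm_le_r x y : unit_iv x -> unit_iv y -> T x y <= y.
Proof. intros. rewrite tnorm_comm; auto. apply tnorm_le_l; auto. Qed.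

Lemma tnorm_0_r x : unit_iv x -> T x 0 = 0.
Proof.
  intros Hx. pose proof (tnorm_le_r x 0 Hx unit_iv_0). pose proof (tnorm_unit x 0 Hx unit_iv_0).
  unfold unit_iv in *. lra.
Qed.

Lemma tnorm_0_l y : unit_iv y -> T 0 y = 0.
Proof. intros. rewrite tnorm_comm; auto using unit_iv_0. apply tnorm_0_r; auto. Qed.

Lemma conv_upper L K r s1 s2 : in_Delta_plus L -> in_Delta_plus K -> s1 + s2 = r ->
  T (L (Fin s1)) (K (Fin s2)) <= conv T L K (Fin r).
Proof.
  intros HL HK Hs. simpl. apply Rsup_upper with 1.
  - intros y [s ->]. apply tnorm_unit; apply Delta_unit; auto.
  - exists s1. replace (r - s1) with s2 by lra. reflexivity.
Qed.

Lemma conv_least L K r M :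
  (forall s1 s2, s1 + s2 = r -> T (L (Fin s1)) (K (Fin s2)) <= M) -> conv T L K (Fin r) <= M.
Proof.
  intros H. simpl. apply Rsup_least.
  - exists (T (L (Fin 0)) (K (Fin (r - 0)))), 0; auto.
  - intros y [s ->]. apply H; lra.
Qed.

Lemma conv_approx L K r : in_Delta_plus L -> in_Delta_plus K -> forall eps, 0 < eps ->
  exists s1 s2, s1 + s2 = r /\ conv T L K (Fin r) - eps < T (L (Fin s1)) (K (Fin s2)).
Proof.
  intros HL HK eps He. simpl.
  destruct (Rsup_approx (fun v => exists s, v = T (L (Fin s)) (K (Fin (r - s)))) 1)
    with (eps := eps) as [y [[s ->] Hy]]; auto.
  - exists (T (L (Fin 0)) (K (Fin (r - 0)))), 0; auto.
  - intros y [s ->]. apply tnorm_unit; apply Delta_unit; auto.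
  - exists s, (r - s). split; [lra | exact Hy].
Qed.

Lemma conv_unit L K t : in_Delta_plus L -> in_Delta_plus K -> unit_iv (conv T L K t).
Proof.
  intros HL HK. destruct t as [|r|]; simpl; unfold unit_iv; try lra. split.
  - apply Rle_trans with (T (L (Fin 0)) (K (Fin r))).
    + apply tnorm_unit; apply Delta_unit; auto.
    + apply (conv_upper L K r 0 r); auto; lra.
  - apply conv_least. intros s1 s2 _. apply tnorm_unit; apply Delta_unit; auto.
Qed.

Lemma conv_comm L K : in_Delta_plus L -> in_Delta_plus K -> conv T L K = conv T K L.
Proof.
  intros HL HK. apply distf_ext; intros [|r|]; simpl; auto.
  apply Rsup_ext. intros v; split; intros [s ->]; exists (r - s);
    replace (r - (r - s)) with s by lra; apply tnorm_comm; apply Delta_unit; auto.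
Qed.

Lemma conv_H0_r F : in_Delta_plus F -> conv T F H0 = F.
Proof.
  intros HF. apply dle_antisym; intros [|r|];
    try (simpl; rewrite Delta_NInf; auto; lra); try (simpl; rewrite Delta_PInf; auto; lra).
  - apply conv_least. intros s1 s2 Hs. simpl. destruct (Rle_dec s2 0).
    + rewrite tnorm_0_r by (apply Delta_unit; auto). apply Delta_unit; auto.
    + rewrite tnorm_1_r by (apply Delta_unit; auto). apply Delta_mono; auto; lra.
  - apply Rle_of_approx; intros eps He.
    destruct (Delta_left_cont F r eps HF He) as [d [Hd Hc]].
    specialize (Hc (r - d/2) ltac:(lra)).
    pose proof (conv_upper F H0 r (r - d/2) (d/2) HF H0_Delta ltac:(lra)) as Hup.
    rewrite H0_pos, tnorm_1_r in Hup by (try apply Delta_unit; auto; lra). lra.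
Qed.

Lemma conv_H0_l F : in_Delta_plus F -> conv T H0 F = F.
Proof. intros HF. rewrite conv_comm; auto using H0_Delta. apply conv_H0_r; auto. Qed.

Hypothesis hTlc : tnorm_left_continuous T.

Lemma tnorm_lsc_r a b : unit_iv a -> unit_iv b -> forall eps, 0 < eps ->
  exists delta, 0 < delta /\ forall y, unit_iv y -> b - delta < y -> T a b - eps < T a y.
Proof.
  intros Ha Hb eps He.
  destruct (Rle_dec b 0) as [hb|hb].
  - exists 1. split; [lra|]. intros y Hy _.
    replace b with 0 by (destruct Hb; lra). rewrite tnorm_0_r by exact Ha.
    pose proof (tnorm_unit a y Ha Hy) as [H0y _]. lra.
  - destruct (hTlc b a ltac:(destruct Hb; lra) Ha eps He) as [d [Hd Hc]].
    exists d. split; [exact Hd|]. intros y Hy Hlt.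
    rewrite (tnorm_comm a b), (tnorm_comm a y); auto.
    destruct (Rle_dec y b) as [hyb|hyb].
    + specialize (Hc y ltac:(lra) ltac:(destruct Hy; lra)). apply Rabs_def2 in Hc. lra.
    + assert (T b a <= T y a) by (apply tnorm_mono_l; auto; lra). lra.
Qed.

Lemma tnorm_lsc_l a b : unit_iv a -> unit_iv b -> forall eps, 0 < eps ->
  exists delta, 0 < delta /\ forall x, unit_iv x -> a - delta < x -> T a b - eps < T x b.
Proof.
  intros Ha Hb eps He. destruct (tnorm_lsc_r b a Hb Ha eps He) as [d [Hd H]].
  exists d; split; [exact Hd|]. intros x Hx Hl. specialize (H x Hx Hl).
  rewrite (tnorm_comm a b), (tnorm_comm x b); auto.
Qed.

Lemma tnorm_lsc a b : unit_iv a -> unit_iv b -> forall eps, 0 < eps -> exists delta, 0 < delta /\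
  forall x y, unit_iv x -> unit_iv y -> a - delta < x -> b - delta < y -> T a b - eps < T x y.
Proof.
  intros Ha Hb eps He.
  destruct (tnorm_lsc_r a b Ha Hb (eps/2) ltac:(lra)) as [d1 [Hd1 H1]].
  (* a fixed second argument [y0] strictly below [b], through which [T a b] is approached *)
  set (y0 := Rmax 0 (b - d1/2)).
  assert (Hy0 : unit_iv y0).
  { unfold y0, unit_iv in *. split; [apply Rmax_l | apply Rmax_lub; lra]. }
  specialize (H1 y0 Hy0 ltac:(unfold y0; pose proof (Rmax_r 0 (b - d1/2)); lra)).
  destruct (tnorm_lsc_l a y0 Ha Hy0 (eps/2) ltac:(lra)) as [d2 [Hd2 H2]].
  exists (Rmin d2 (d1/2)). split; [apply Rmin_pos; lra|].
  intros x y Hx Hy Hxl Hyl.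
  pose proof (Rmin_l d2 (d1/2)). pose proof (Rmin_r d2 (d1/2)).
  specialize (H2 x Hx ltac:(lra)).
  assert (T x y0 <= T x y).
  { apply tnorm_mono_r; auto. unfold y0. apply Rmax_lub; [destruct Hy|]; lra. }
  lra.
Qed.

Lemma tnorm_near_1 eps : 0 < eps -> exists delta, 0 < delta /\
  forall x y, unit_iv x -> unit_iv y -> 1 - delta < x -> 1 - delta < y -> 1 - eps < T x y.
Proof.
  intros He. destruct (tnorm_lsc 1 1 unit_iv_1 unit_iv_1 eps He) as [d [Hd H]].
  exists d; split; [exact Hd|]. intros x y Hx Hy H1 H2.
  specialize (H x y Hx Hy H1 H2). rewrite tnorm_1_r in H; auto using unit_iv_1.
Qed.

Lemma tnorm_le_of_approx a c M : unit_iv a -> unit_iv c ->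
  (forall d, 0 < d -> exists c', unit_iv c' /\ c - d < c' /\ T a c' <= M) -> T a c <= M.
Proof.
  intros Ha Hc H. apply Rle_of_approx; intros eps He.
  destruct (tnorm_lsc_r a c Ha Hc eps He) as [d [Hd Hlsc]].
  destruct (H d Hd) as [c' [Hc' [Hlt Hle]]].
  specialize (Hlsc c' Hc' Hlt). lra.
Qed.

Lemma conv_Delta L K : in_Delta_plus L -> in_Delta_plus K -> in_Delta_plus (conv T L K).
Proof.
  intros HL HK. repeat split; try reflexivity.
  - apply conv_unit; auto.
  - apply conv_unit; auto.
  - intros s t Hst. apply conv_least. intros s1 s2 Hs.
    apply Rle_trans with (T (L (Fin s1)) (K (Fin (s2 + (t - s))))).
    + apply tnorm_mono_r; try apply Delta_unit; auto. apply Delta_mono; auto; lra.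
    + apply conv_upper; auto; lra.
  - intros t eps He.
    destruct (conv_approx L K t HL HK (eps/2) ltac:(lra)) as [s1 [s2 [Hs Happ]]].
    destruct (tnorm_lsc (L (Fin s1)) (K (Fin s2)) (Delta_unit _ _ HL) (Delta_unit _ _ HK)
      (eps/2) ltac:(lra)) as [d1 [Hd1 Hl]].
    destruct (Delta_left_cont L s1 d1 HL Hd1) as [dL [HdL HcL]].
    destruct (Delta_left_cont K s2 d1 HK Hd1) as [dK [HdK HcK]].
    exists (Rmin dL dK). split; [apply Rmin_pos; auto|].
    intros s Hs'. pose proof (Rmin_l dL dK). pose proof (Rmin_r dL dK).
    set (h := (t - s)/2).
    specialize (HcL (s1 - h) ltac:(unfold h; lra)).
    specialize (HcK (s2 - h) ltac:(unfold h; lra)).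
    specialize (Hl (L (Fin (s1 - h))) (K (Fin (s2 - h)))
      (Delta_unit _ _ HL) (Delta_unit _ _ HK) ltac:(lra) ltac:(lra)).
    pose proof (conv_upper L K s (s1 - h) (s2 - h) HL HK ltac:(unfold h; lra)). lra.
  - apply Rle_antisym; [|apply (conv_unit L K (Fin 0) HL HK)].
    apply conv_least. intros s1 s2 Hs. destruct (Rle_dec s1 0).
    + rewrite (Delta_nonpos L s1), tnorm_0_l; auto; try lra. apply Delta_unit; auto.
    + rewrite (Delta_nonpos K s2), tnorm_0_r; auto; try lra. apply Delta_unit; auto.
Qed.

Lemma conv_tends_to_H0 (F K : nat -> distf) :
  (forall n, in_Delta_plus (F n)) -> (forall n, in_Delta_plus (K n)) ->
  tends_to_H0 F -> tends_to_H0 K ->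
  forall t eps, 0 < t -> 0 < eps -> exists N, forall n p, (N <= n)%nat -> (N <= p)%nat ->
    1 - eps < conv T (F n) (K p) (Fin t).
Proof.
  intros HF HK HFt HKt t eps Ht He.
  destruct (tnorm_near_1 eps He) as [d [Hd Hnear]].
  destruct (HFt (t/2) d ltac:(lra) Hd) as [N1 HN1].
  destruct (HKt (t/2) d ltac:(lra) Hd) as [N2 HN2].
  exists (Nat.max N1 N2). intros n p Hn Hp.
  eapply Rlt_le_trans; [|apply (conv_upper _ _ t (t/2) (t/2)); auto; lra].
  apply Hnear; try apply Delta_unit; auto.
  - apply HN1; lia.
  - apply HN2; lia.
Qed.

Lemma H0_of_conv_tends (F K : nat -> distf) (L : distf) :
  (forall n, in_Delta_plus (F n)) -> (forall n, in_Delta_plus (K n)) -> in_Delta_plus L ->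
  tends_to_H0 F -> tends_to_H0 K -> (forall n, dle (conv T (F n) (K n)) L) -> L = H0.
Proof.
  intros HF HK HL HFt HKt Hle. apply Delta_eq_H0; [exact HL|]. intros r eps Hr He.
  destruct (conv_tends_to_H0 F K HF HK HFt HKt r eps Hr He) as [N HN].
  specialize (HN N N (le_n N) (le_n N)). specialize (Hle N (Fin r)). lra.
Qed.

Lemma wconv2_H0_of_conv_tends (F K : nat -> distf) (Dnp : nat -> nat -> distf) :
  (forall n, in_Delta_plus (F n)) -> (forall n, in_Delta_plus (K n)) ->
  (forall n p, in_Delta_plus (Dnp n p)) -> tends_to_H0 F -> tends_to_H0 K ->
  (forall n p, dle (conv T (F n) (K p)) (Dnp n p)) -> wconv2 Dnp H0.
Proof.
  intros HF HK HD HFt HKt Hle t _ eps He.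
  destruct (Rle_dec t 0) as [Ht|Ht].
  - exists 0%nat. intros n p _ _. rewrite (Delta_nonpos _ t (HD n p) Ht).
    simpl. destruct (Rle_dec t 0); [|lra]. rewrite Rminus_0_r, Rabs_R0; lra.
  - destruct (conv_tends_to_H0 F K HF HK HFt HKt t eps ltac:(lra) He) as [N HN].
    exists N; intros n p Hn Hp. specialize (HN n p Hn Hp). specialize (Hle n p (Fin t)).
    pose proof (Delta_unit _ (Fin t) (HD n p)) as [_ H1].
    rewrite H0_pos by lra. apply Rabs_def1; lra.
Qed.

Section MengerGroup.

Context {G : Type} {mul : G -> G -> G} {e : G} {inv : G -> G} {D : G -> G -> distf}.
Hypotheses (hG : is_group mul e inv) (hD : is_Menger T D) (hI : is_invariant mul D).

Lemma mulA x y z : mul x (mul y z) = mul (mul x y) z.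
Proof. destruct hG as [h _]; auto. Qed.
Lemma mul1g x : mul e x = x.
Proof. destruct hG as [_ [h _]]; auto. Qed.
Lemma mulg1 x : mul x e = x.
Proof. destruct hG as [_ [_ [h _]]]; auto. Qed.
Lemma mulVg x : mul (inv x) x = e.
Proof. destruct hG as [_ [_ [_ [h _]]]]; auto. Qed.
Lemma mulgV x : mul x (inv x) = e.
Proof. destruct hG as [_ [_ [_ [_ h]]]]; auto. Qed.
Lemma mulKVg y x : mul y (mul (inv y) x) = x.
Proof. rewrite mulA, mulgV, mul1g; auto. Qed.

Lemma D_Delta p q : in_Delta_plus (D p q).
Proof. destruct hD as [h _]; auto. Qed.
Lemma D_unit p q t : unit_iv (D p q t).
Proof. apply Delta_unit, D_Delta. Qed.
Lemma D_refl p : D p p = H0.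
Proof. destruct hD as [_ [h _]]; apply h; auto. Qed.
Lemma D_eq_H0 p q : D p q = H0 -> p = q.
Proof. destruct hD as [_ [h _]]; apply h; auto. Qed.
Lemma D_sym p q : D p q = D q p.
Proof. destruct hD as [_ [_ [h _]]]; auto. Qed.
Lemma D_triangle p q r : dle (conv T (D p q) (D q r)) (D p r).
Proof. destruct hD as [_ [_ [_ h]]]; auto. Qed.
Lemma D_mulr p q r : D (mul p r) (mul q r) = D p q.
Proof. apply (hI p q r). Qed.
Lemma D_mull p q r : D (mul r p) (mul r q) = D p q.
Proof. apply (hI p q r). Qed.

Lemma D_shift y z w : mul y z = e -> D y w = D e (mul z w).
Proof.
  intros Hyz. rewrite <- (D_mull e (mul z w) y), mulg1, mulA, Hyz, mul1g. reflexivity.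
Qed.

Lemma delta_inj x y : D x = D y -> x = y.
Proof. intros H. apply D_eq_H0. rewrite H. apply D_refl. Qed.

Lemma Lip_Delta f x : is_Lip T D f -> in_Delta_plus (f x).
Proof. intros [h _]; auto. Qed.
Lemma Lip_unit f x t : is_Lip T D f -> unit_iv (f x t).
Proof. intros Hf. apply Delta_unit, (Lip_Delta f x Hf). Qed.
Lemma Lip_ineq f x y : is_Lip T D f -> dle (conv T (D x y) (f y)) (f x).
Proof. intros [_ h]; auto. Qed.

Lemma Lip_delta a : is_Lip T D (D a).
Proof.
  split; [intros; apply D_Delta|]. intros x y.
  rewrite (conv_comm (D x y) (D a y)), (D_sym x y) by apply D_Delta. apply D_triangle.
Qed.

Lemma odot_family_Delta f g x : is_Lip T D f -> is_Lip T D g ->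
  forall F, (exists y z, mul y z = x /\ F = conv T (f y) (g z)) -> in_Delta_plus F.
Proof.
  intros Hf Hg F [y [z [_ ->]]]. apply conv_Delta; apply Lip_Delta; auto.
Qed.

Lemma odot_family_nonempty f g x :
  exists F, exists y z, mul y z = x /\ F = conv T (f y) (g z).
Proof. exists (conv T (f x) (g e)), x, e. split; [apply mulg1 | reflexivity]. Qed.

Lemma odot_Delta f g x : is_Lip T D f -> is_Lip T D g -> in_Delta_plus (odot mul T f g x).
Proof.
  intros Hf Hg. apply dsup_Delta; [apply odot_family_nonempty | apply odot_family_Delta; auto].
Qed.

Lemma odot_upper f g x y z : is_Lip T D f -> is_Lip T D g -> mul y z = x ->
  dle (conv T (f y) (g z)) (odot mul T f g x).
Proof.
  intros Hf Hg Hyz [|r|]; try (simpl; lra).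
  apply dsup_upper; [apply odot_family_Delta; auto | exists y, z; auto].
Qed.

Lemma odot_delta a b : odot mul T (D a) (D b) = D (mul a b).
Proof.
  apply functional_extensionality; intros x. apply dsup_eq_max; [| |apply D_Delta].
  - exists a, (mul (inv a) x). split; [apply mulKVg|].
    rewrite D_refl, conv_H0_l by apply D_Delta.
    rewrite <- (D_mull b (mul (inv a) x) a), mulKVg. reflexivity.
  - intros F [y [z [Hyz ->]]].
    rewrite <- (D_mulr a y b), <- (D_mull b z y), Hyz. apply D_triangle.
Qed.

Lemma odot_delta_e_l f : is_Lip T D f -> odot mul T (D e) f = f.
Proof.
  intros Hf. apply functional_extensionality; intros x.
  apply dsup_eq_max; [| |apply Lip_Delta; auto].
  - exists e, x. split; [apply mul1g|]. rewrite D_refl, conv_H0_l; auto. apply Lip_Delta; auto.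
  - intros F [y [z [Hyz ->]]].
    rewrite <- (D_mulr e y z), mul1g, Hyz, D_sym. apply Lip_ineq; auto.
Qed.

Lemma odot_delta_e_r f : is_Lip T D f -> odot mul T f (D e) = f.
Proof.
  intros Hf. apply functional_extensionality; intros x.
  apply dsup_eq_max; [| |apply Lip_Delta; auto].
  - exists x, e. split; [apply mulg1|]. rewrite D_refl, conv_H0_r; auto. apply Lip_Delta; auto.
  - intros F [y [z [Hyz ->]]].
    rewrite <- (D_mull e z y), mulg1, Hyz, conv_comm, D_sym; [apply Lip_ineq; auto| |];
      [apply Lip_Delta; auto | apply D_Delta].
Qed.

(* The witness is [y z' = x] with [z' = y^-1 x]; invariance gives [D x (y z) = D z' z]. *)
Lemma odot_Lip_pointwise f g x y z s1 u1 u2 : is_Lip T D f -> is_Lip T D g ->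
  T (D x (mul y z) (Fin s1)) (T (f y (Fin u1)) (g z (Fin u2)))
    <= odot mul T f g x (Fin (s1 + (u1 + u2))).
Proof.
  intros Hf Hg. set (z' := mul (inv y) x).
  assert (Ea : D x (mul y z) (Fin s1) = D z' z (Fin s1)).
  { unfold z'. rewrite <- (D_mull (mul (inv y) x) z y), mulKVg. reflexivity. }
  rewrite Ea.
  pose proof (D_unit z' z (Fin s1)) as Va.
  pose proof (Lip_unit f y (Fin u1) Hf) as Vp. pose proof (Lip_unit g z (Fin u2) Hg) as Vq.
  rewrite tnorm_assoc, (tnorm_comm (D z' z (Fin s1)) (f y (Fin u1))), <- tnorm_assoc
    by auto using tnorm_unit.
  assert (Hq : T (D z' z (Fin s1)) (g z (Fin u2)) <= g z' (Fin (s1 + u2))).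
  { eapply Rle_trans; [apply (conv_upper (D z' z) (g z) (s1 + u2) s1 u2)|apply Lip_ineq];
      auto using D_Delta, Lip_Delta. }
  eapply Rle_trans; [apply tnorm_mono_r; [| | |exact Hq]; auto using tnorm_unit, Lip_unit|].
  eapply Rle_trans; [apply (conv_upper (f y) (g z') (s1 + (u1 + u2)) u1 (s1 + u2))|];
    auto using Lip_Delta; [lra|].
  apply odot_upper; auto. apply mulKVg.
Qed.

Lemma odot_Lip_step f g x w s1 s2 : is_Lip T D f -> is_Lip T D g ->
  T (D x w (Fin s1)) (odot mul T f g w (Fin s2)) <= odot mul T f g x (Fin (s1 + s2)).
Proof.
  intros Hf Hg. pose proof (D_unit x w (Fin s1)) as Ha.
  apply tnorm_le_of_approx; [exact Ha | apply Delta_unit, odot_Delta; auto |].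
  intros d Hd.
  destruct (dsup_approx _ s2 (odot_family_Delta f g w Hf Hg) (odot_family_nonempty f g w) d Hd)
    as [F [[y [z [Hyz ->]]] HF]].
  assert (Hfy := Lip_Delta f y Hf). assert (Hgz := Lip_Delta g z Hg).
  exists (conv T (f y) (g z) (Fin s2)).
  split; [apply conv_unit; auto|]. split; [exact HF|].
  apply tnorm_le_of_approx; [exact Ha | apply conv_unit; auto |].
  intros d' Hd'.
  destruct (conv_approx (f y) (g z) s2 Hfy Hgz d' Hd') as [u1 [u2 [Hu Hc]]].
  exists (T (f y (Fin u1)) (g z (Fin u2))).
  split; [apply tnorm_unit; apply Delta_unit; auto|]. split; [exact Hc|].
  subst w s2. apply odot_Lip_pointwise; auto.
Qed.

Lemma odot_Lip f g : is_Lip T D f -> is_Lip T D g -> is_Lip T D (odot mul T f g).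
Proof.
  intros Hf Hg. split; [intros x; apply odot_Delta; auto|].
  intros x w [|r|]; try (simpl; lra).
  apply conv_least. intros s1 s2 Hs. subst r. apply odot_Lip_step; auto.
Qed.

Lemma in_Pi_delta a : in_Pi T D (D a).
Proof.
  split; [apply Lip_delta|]. exists (fun _ => a). split.
  - intros t _ eps He. exists 0%nat. intros n p _ _.
    rewrite D_refl, Rminus_diag, Rabs_R0; lra.
  - intros x t _ eps He. exists 0%nat. intros n _.
    unfold R_dist. rewrite Rminus_diag, Rabs_R0; lra.
Qed.

Lemma DD_delta x y : DD T (D x) (D y) = D x y.
Proof.
  apply dsup_eq_max; [| |apply D_Delta].
  - exists y. rewrite D_refl, conv_H0_r; auto. apply D_Delta.
  - intros F [w ->]. rewrite (D_sym y w). apply D_triangle.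
Qed.

Lemma DDbar_delta x y : DDbar T D (D x) (D y) = D x y.
Proof.
  unfold DDbar. destruct (excluded_middle_informative _) as [_|n].
  - apply DD_delta.
  - exfalso; apply n; split; apply in_Pi_delta.
Qed.

Lemma odot_H0_near_pair u v : is_Lip T D u -> is_Lip T D v -> odot mul T u v e = H0 ->
  forall t eps, 0 < t -> 0 < eps < 1 ->
  exists y z, mul y z = e /\ 1 - eps < u y (Fin t) /\ 1 - eps < v z (Fin t).
Proof.
  intros Hu Hv He t eps Ht Heps.
  assert (Hval : odot mul T u v e (Fin t) = 1) by (rewrite He; apply H0_pos; auto).
  destruct (dsup_approx _ t (odot_family_Delta u v e Hu Hv) (odot_family_nonempty u v e)
    (eps/2) ltac:(lra)) as [F [[y [z [Hyz ->]]] HF]].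
  change (dsup _ (Fin t)) with (odot mul T u v e (Fin t)) in HF. rewrite Hval in HF.
  assert (Huy := Lip_Delta u y Hu). assert (Hvz := Lip_Delta v z Hv).
  destruct (conv_approx (u y) (v z) t Huy Hvz (eps/2) ltac:(lra)) as [s1 [s2 [Hs Happ]]].
  pose proof (tnorm_le_l _ _ (Delta_unit _ (Fin s1) Huy) (Delta_unit _ (Fin s2) Hvz)).
  pose proof (tnorm_le_r _ _ (Delta_unit _ (Fin s1) Huy) (Delta_unit _ (Fin s2) Hvz)).
  (* [1 - eps < u y s1] and [1 - eps < v z s2] force [s1, s2 > 0], hence [s1, s2 <= t] *)
  assert (Hs1 : 0 < s1).
  { apply Rnot_le_lt; intros h. rewrite (Delta_nonpos _ s1 Huy h) in *. lra. }
  assert (Hs2 : 0 < s2).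
  { apply Rnot_le_lt; intros h. rewrite (Delta_nonpos _ s2 Hvz h) in *. lra. }
  exists y, z. split; [exact Hyz|]. split.
  - pose proof (Delta_mono _ s1 t Huy ltac:(lra)). lra.
  - pose proof (Delta_mono _ s2 t Hvz ltac:(lra)). lra.
Qed.

Hypothesis hC : is_complete D.

Lemma Lip_attains_H0 u v : is_Lip T D u -> is_Lip T D v -> odot mul T u v e = H0 ->
  (forall x, dle (odot mul T v u x) (D e x)) -> exists a, u a = H0.
Proof.
  intros Hu Hv Huv Hvu.
  assert (Hpair : forall n, exists p : G * G, mul (fst p) (snd p) = e /\
    1 - epsn n < u (fst p) (Fin (epsn n)) /\ 1 - epsn n < v (snd p) (Fin (epsn n))).
  { intros n. destruct (odot_H0_near_pair u v Hu Hv Huv (epsn n) (epsn n) (epsn_pos n)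
      (conj (epsn_pos n) (epsn_lt_1 n))) as [y [z H]].
    exists (y, z); exact H. }
  destruct (choice _ Hpair) as [p Hp].
  set (y := fun n => fst (p n)). set (z := fun n => snd (p n)).
  assert (Huy : tends_to_H0 (fun n => u (y n))).
  { apply tends_to_H0_of_rate; [intros; apply Lip_Delta; auto | intros n; apply Hp]. }
  assert (Hvz : tends_to_H0 (fun n => v (z n))).
  { apply tends_to_H0_of_rate; [intros; apply Lip_Delta; auto | intros n; apply Hp]. }
  assert (Hcauchy : is_Cauchy D y).
  { apply (wconv2_H0_of_conv_tends (fun n => v (z n)) (fun n => u (y n)));
      auto using Lip_Delta, D_Delta.
    intros n m. rewrite (D_shift (y n) (z n) (y m)) by apply Hp.
    intros t. eapply Rle_trans; [apply (odot_upper v u (mul (z n) (y m)) (z n) (y m)); auto | apply Hvu]. }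
  destruct (hC y Hcauchy) as [a Ha]. exists a.
  apply (H0_of_conv_tends (fun n => D a (y n)) (fun n => u (y n)));
    auto using Lip_Delta, D_Delta.
  - apply tends_to_H0_of_wconv. intros t Ht eps He.
    destruct (Ha t Ht eps He) as [N HN]. exists N; intros n Hn. rewrite D_sym. apply HN; auto.
  - intros n. apply Lip_ineq; auto.
Qed.

Lemma Lip_unit_is_delta u v : is_Lip T D u -> is_Lip T D v ->
  odot mul T u v = D e -> odot mul T v u = D e -> exists a, u = D a.
Proof.
  intros Hu Hv Huv Hvu.
  destruct (Lip_attains_H0 u v Hu Hv) as [a Ha].
  { rewrite Huv. apply D_refl. }
  { intros x. rewrite Hvu. intros t; lra. }
  destruct (Lip_attains_H0 v u Hv Hu) as [b Hb].
  { rewrite Hvu. apply D_refl. }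
  { intros x. rewrite Huv. intros t; lra. }
  assert (Hup : forall x, dle (u x) (D (inv b) x)).
  { intros x. rewrite (D_shift (inv b) b x) by apply mulVg.
    rewrite <- Hvu, <- (conv_H0_l (u x)), <- Hb by (apply Lip_Delta; auto).
    apply odot_upper; auto. }
  assert (Hlo : forall x, dle (D a x) (u x)).
  { intros x. rewrite D_sym, <- (conv_H0_r (D x a)), <- Ha by apply D_Delta.
    apply Lip_ineq; auto. }
  assert (Eb : inv b = a).
  { apply D_eq_H0, Delta_ge_H0_eq; [apply D_Delta|]. rewrite <- Ha. apply Hup. }
  exists a. apply functional_extensionality; intros x.
  apply dle_antisym; [rewrite <- Eb; apply Hup | apply Hlo].
Qed.

End MengerGroup.

Section InducedIsomorphism.

Context {G G' : Type}
  {mul : G -> G -> G} {e : G} {inv : G -> G} {D : G -> G -> distf}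
  {mul' : G' -> G' -> G'} {e' : G'} {inv' : G' -> G'} {D' : G' -> G' -> distf}.
Hypotheses (hG : is_group mul e inv) (hD : is_Menger T D)
  (hI : is_invariant mul D) (hC : is_complete D)
  (hG' : is_group mul' e' inv') (hD' : is_Menger T D')
  (hI' : is_invariant mul' D') (hC' : is_complete D').

Variable Phi : (G -> distf) -> (G' -> distf).
Hypotheses
  (Phi_Lip : forall f, is_Lip T D f -> is_Lip T D' (Phi f))
  (Phi_surj : forall g, is_Lip T D' g -> exists f, is_Lip T D f /\ Phi f = g)
  (Phi_inj : forall f1 f2, is_Lip T D f1 -> is_Lip T D f2 -> Phi f1 = Phi f2 -> f1 = f2)
  (Phi_odot : forall f1 f2, is_Lip T D f1 -> is_Lip T D f2 ->
     Phi (odot mul T f1 f2) = odot mul' T (Phi f1) (Phi f2))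
  (Phi_DDbar : forall f1 f2, is_Lip T D f1 -> is_Lip T D f2 ->
     DDbar T D' (Phi f1) (Phi f2) = DDbar T D f1 f2).

Lemma Phi_delta_e : Phi (D e) = D' e'.
Proof.
  destruct (Phi_surj (D' e') (Lip_delta hD' e')) as [g [Hg Hge]].
  pose proof (Phi_odot (D e) g (Lip_delta hD e) Hg) as H.
  rewrite (odot_delta_e_l hG hD hI g Hg), Hge in H.
  rewrite (odot_delta_e_r hG' hD' hI') in H by (apply Phi_Lip, Lip_delta; auto).
  congruence.
Qed.

Lemma Phi_delta a : exists a', Phi (D a) = D' a'.
Proof.
  apply (Lip_unit_is_delta hG' hD' hI' hC' (Phi (D a)) (Phi (D (inv a))));
    try (apply Phi_Lip, Lip_delta; auto);
    rewrite <- Phi_odot by (apply Lip_delta; auto);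
    rewrite (odot_delta hG hD hI), <- Phi_delta_e;
    [rewrite (mulgV hG) | rewrite (mulVg hG)]; auto.
Qed.

Section InducedMap.

Variable I : G -> G'.
Hypothesis HI : forall a, Phi (D a) = D' (I a).

Lemma induced_map_surj y' : exists x, I x = y'.
Proof.
  destruct (Phi_surj (D' y') (Lip_delta hD' y')) as [f [Hf Hfe]].
  destruct (Phi_surj (D' (inv' y')) (Lip_delta hD' _)) as [g [Hg Hge]].
  assert (Hfg : odot mul T f g = D e).
  { apply Phi_inj; [apply (odot_Lip hG hD hI); auto | apply (Lip_delta hD) |].
    rewrite Phi_odot, Hfe, Hge, Phi_delta_e, (odot_delta hG' hD' hI'), (mulgV hG'); auto. }
  assert (Hgf : odot mul T g f = D e).
  { apply Phi_inj; [apply (odot_Lip hG hD hI); auto | apply (Lip_delta hD) |].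
    rewrite Phi_odot, Hfe, Hge, Phi_delta_e, (odot_delta hG' hD' hI'), (mulVg hG'); auto. }
  destruct (Lip_unit_is_delta hG hD hI hC f g Hf Hg Hfg Hgf) as [a Ha].
  exists a. apply (delta_inj hD'). rewrite <- HI, <- Ha. exact Hfe.
Qed.

Lemma induced_map_isometric_group_iso : isometric_group_iso mul D mul' D' I.
Proof.
  pose proof (Lip_delta hD) as LD.
  split; [|split; [exact induced_map_surj | split]].
  - intros x y. apply (delta_inj hD').
    rewrite <- HI, <- (odot_delta hG hD hI), Phi_odot, !HI by auto.
    apply (odot_delta hG' hD' hI').
  - intros x1 x2 H. apply (delta_inj hD). apply Phi_inj; auto. rewrite !HI, H; reflexivity.
  - intros x y. rewrite <- (DDbar_delta hD'), <- !HI, Phi_DDbar by auto.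
    apply (DDbar_delta hD).
Qed.

End InducedMap.

Lemma Lip_monoid_iso_induces_group_iso : exists I, isometric_group_iso mul D mul' D' I.
Proof.
  destruct (choice _ Phi_delta) as [I HI]. exists I.
  apply induced_map_isometric_group_iso; exact HI.
Qed.

End InducedIsomorphism.

End TNorm.

Section Precomposition.

Context {G G' : Type} (T : R -> R -> R) {D : G -> G -> distf} {D' : G' -> G' -> distf}.
Variable J : G' -> G.
Hypothesis J_iso : forall a b, D (J a) (J b) = D' a b.

Lemma Lip_precomp f : is_Lip T D f -> is_Lip T D' (fun y => f (J y)).
Proof.
  intros [HD HL]. split; [intros; apply HD|]. intros x y. rewrite <- J_iso. apply HL.
Qed.

Variable K : G -> G'.
Hypothesis JK : forall x, J (K x) = x.

Lemma in_Pi_precomp f : in_Pi T D f -> in_Pi T D' (fun y => f (J y)).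
Proof.
  intros [HL [a [Hc Hw]]]. split; [apply Lip_precomp; auto|].
  exists (fun n => K (a n)). split.
  - unfold is_Cauchy.
    replace (fun n p => D' (K (a n)) (K (a p))) with (fun n p => D (a n) (a p)); [exact Hc|].
    apply functional_extensionality; intros n; apply functional_extensionality; intros p.
    rewrite <- J_iso, !JK. reflexivity.
  - intros x.
    replace (fun n => D' (K (a n)) x) with (fun n => D (a n) (J x)); [apply Hw|].
    apply functional_extensionality; intros n. rewrite <- J_iso, JK. reflexivity.
Qed.

Lemma DD_precomp f g : DD T (fun y => f (J y)) (fun y => g (J y)) = DD T f g.
Proof.
  unfold DD. f_equal. apply functional_extensionality; intros F.
  apply propositional_extensionality. split.
  - intros [x ->]. exists (J x); reflexivity.
  - intros [x ->]. exists (K x). rewrite JK; reflexivity.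
Qed.

Lemma precomp_inj (f g : G -> distf) : (fun y => f (J y)) = (fun y => g (J y)) -> f = g.
Proof.
  intros H. apply functional_extensionality; intros x.
  rewrite <- (JK x). exact (equal_f H (K x)).
Qed.

End Precomposition.

Lemma odot_precomp {G G' : Type} (T : R -> R -> R) (mul : G -> G -> G) (mul' : G' -> G' -> G')
  (J : G' -> G) (K : G -> G') (f g : G -> distf) :
  (forall x, J (K x) = x) -> (forall y, K (J y) = y) ->
  (forall a b, J (mul' a b) = mul (J a) (J b)) ->
  (fun y => odot mul T f g (J y)) = odot mul' T (fun y => f (J y)) (fun y => g (J y)).
Proof.
  intros JK KJ Jmul. apply functional_extensionality; intros y. unfold odot. f_equal.
  apply functional_extensionality; intros F. apply propositional_extensionality. split.
  - intros [a [b [Hab ->]]]. exists (K a), (K b). rewrite !JK. split; [|reflexivity].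
    rewrite <- (KJ (mul' _ _)), Jmul, !JK, Hab, KJ. reflexivity.
  - intros [a [b [Hab ->]]]. exists (J a), (J b). rewrite <- Jmul, Hab. auto.
Qed.

Lemma DDbar_precomp {G G' : Type} (T : R -> R -> R) (D : G -> G -> distf)
  (D' : G' -> G' -> distf) (J : G' -> G) (K : G -> G') (f g : G -> distf) :
  (forall x, J (K x) = x) -> (forall y, K (J y) = y) -> (forall a b, D (J a) (J b) = D' a b) ->
  DDbar T D' (fun y => f (J y)) (fun y => g (J y)) = DDbar T D f g.
Proof.
  intros JK KJ Jiso.
  assert (Kiso : forall x y, D' (K x) (K y) = D x y) by (intros; rewrite <- Jiso, !JK; reflexivity).
  assert (Pi_iff : forall h, in_Pi T D' (fun y => h (J y)) <-> in_Pi T D h).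
  { intros h. split; intros Hh.
    - replace h with (fun x => h (J (K x))); [exact (in_Pi_precomp T K Kiso J KJ _ Hh)|].
      apply functional_extensionality; intros x. rewrite JK; reflexivity.
    - exact (in_Pi_precomp T J Jiso K JK h Hh). }
  unfold DDbar.
  destruct (excluded_middle_informative (in_Pi T D' _ /\ in_Pi T D' _)) as [h1|h1];
  destruct (excluded_middle_informative (in_Pi T D f /\ in_Pi T D g)) as [h2|h2].
  - apply (DD_precomp T J K JK).
  - exfalso; apply h2; split; apply Pi_iff; tauto.
  - exfalso; apply h1; split; apply Pi_iff; tauto.
  - destruct (excluded_middle_informative (_ = _)) as [h3|h3];
    destruct (excluded_middle_informative (f = g)) as [h4|h4]; auto; exfalso.
    + exact (h4 (precomp_inj J K JK f g h3)).
    + apply h3; rewrite h4; reflexivity.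
Qed.

Lemma isometric_group_iso_lift {G G' : Type} (T : R -> R -> R)
  (mul : G -> G -> G) (D : G -> G -> distf) (mul' : G' -> G' -> G') (D' : G' -> G' -> distf)
  (I : G -> G') :
  isometric_group_iso mul D mul' D' I ->
  exists Phi, isometric_Lip_monoid_iso T mul D mul' D' Phi.
Proof.
  intros [Imul [Isurj [Iinj Iiso]]].
  destruct (choice _ Isurj) as [J IJ].
  assert (JI : forall x, J (I x) = x) by (intros x; apply Iinj; rewrite IJ; reflexivity).
  assert (Jiso : forall a b, D (J a) (J b) = D' a b) by (intros; rewrite <- Iiso, !IJ; reflexivity).
  assert (Jmul : forall a b, J (mul' a b) = mul (J a) (J b))
    by (intros; apply Iinj; rewrite Imul, !IJ; reflexivity).
  exists (fun f y => f (J y)). split; [|split; [|split; [|split]]].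
  - intros f. apply Lip_precomp; exact Jiso.
  - intros g Hg. exists (fun x => g (I x)). split; [exact (Lip_precomp T I Iiso g Hg)|].
    apply functional_extensionality; intros y. rewrite IJ; reflexivity.
  - intros f1 f2 _ _. apply (precomp_inj J I JI).
  - intros f1 f2 _ _. apply (odot_precomp T mul mul' J I); assumption.
  - intros f1 f2 _ _. apply (DDbar_precomp T D D' J I); assumption.
Qed.

Theorem mainTheorem19
  (T : R -> R -> R) (hT : is_tnorm T) (hTlc : tnorm_left_continuous T)
  (G : Type) (mul : G -> G -> G) (e : G) (inv : G -> G) (D : G -> G -> distf)
  (hG : is_group mul e inv) (hD : is_Menger T D)
  (hDinv : is_invariant mul D) (hDc : is_complete D)
  (G' : Type) (mul' : G' -> G' -> G') (e' : G') (inv' : G' -> G') (D' : G' -> G' -> distf)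
  (hG' : is_group mul' e' inv') (hD' : is_Menger T D')
  (hDinv' : is_invariant mul' D') (hDc' : is_complete D') :
  (exists I : G -> G',
      (forall x y, I (mul x y) = mul' (I x) (I y)) /\
      (forall y', exists x, I x = y') /\
      (forall x1 x2, I x1 = I x2 -> x1 = x2) /\
      (forall x y, D' (I x) (I y) = D x y))
  <->
  (exists Phi : (G -> distf) -> (G' -> distf),
      (forall f, is_Lip T D f -> is_Lip T D' (Phi f)) /\
      (forall g, is_Lip T D' g -> exists f, is_Lip T D f /\ Phi f = g) /\
      (forall f1 f2, is_Lip T D f1 -> is_Lip T D f2 -> Phi f1 = Phi f2 -> f1 = f2) /\
      (forall f1 f2, is_Lip T D f1 -> is_Lip T D f2 ->
         Phi (odot mul T f1 f2) = odot mul' T (Phi f1) (Phi f2)) /\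
      (forall f1 f2, is_Lip T D f1 -> is_Lip T D f2 ->
         DDbar T D' (Phi f1) (Phi f2) = DDbar T D f1 f2)).
Proof.
  split.
  - intros [I HI]. exact (isometric_group_iso_lift T mul D mul' D' I HI).
  - intros [Phi [Phi_Lip [Phi_surj [Phi_inj [Phi_odot Phi_DDbar]]]]].
    exact (Lip_monoid_iso_induces_group_iso hT hTlc hG hD hDinv hDc hG' hD' hDinv' hDc'
      Phi Phi_Lip Phi_surj Phi_inj Phi_odot Phi_DDbar).
Qed.
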